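(* Let $I=[a,b)\subseteq[0,1)$ with $a<b$. (a) For every $x^n\in\{0,1\}^n$, $\bar F_I(x^n)\ge F_I(x^n-1)$. (b) For every $x^n$ that is not the largest element in Gray order, $\bar F_I(x^n)\ge\lfloor F_I(x^n)\rfloor_{\lambda_h(x^n+1)}$. (c) Consequently, for every $x^n$ that is neither the smallest nor the largest element in Gray order, $$\Big[\min\{\bar F_I(x^n-1),F_I(x^n-1)\},\ \min\{\bar F_I(x^n),F_I(x^n)\}\Big)\subseteq\Big[\lfloor F_I(x^n-1)\rfloor_{\lambda_h(x^n)},\ \bar F_I(x^n)\Big).$$
   Context: Let $p$ be a probability distribution on $\{0,1\}$ with $p(0),p(1)\in(0,1)$, $p(0)\ne p(1)$, $\rho=\max\{p(0)/p(1),p(1)/p(0)\}$, and $p(x^n)=\prod_i p(x_i)$. Gray code is $g(x^n)=x^n\oplus(0,x_1,\dots,x_{n-1})$; Gray order $\preceq_G$ on $\{0,1\}^n$ is $x^n\preceq_G y^n$ iff $g^{-1}(x^n)\preceq_L g^{-1}(y^n)$ (lexicographic). $x^n+1$ and $x^n-1$ denote the immediate successor and predecessor in Gray order. $F(x^n)=\sum_{a^n\preceq_G x^n}p(a^n)$, with $F(x^n-1):=0$ if $x^n$ is the smallest element. For an interval $I=[a,b)$: $F_I(x^n)=a+(b-a)F(x^n)$; $\alpha_h:=\rho$; $\lambda_h(x^n)=\lfloor-\log_2(\alpha_h(b-a)p(x^n))\rfloor$ (an integer); $\bar F_I(x^n)=\lfloor F_I(x^n-1)+2^{-\lambda_h(x^n)}\rfloor_{\lambda_h(x^n)}$.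 For real $r\ge0$ and integer $l$, $\lfloor r\rfloor_l=2^{-l}\lfloor 2^lr\rfloor$. *)

From Stdlib Require Import Reals Lra Lia ZArith List Bool.
Import ListNotations.
Open Scope R_scope.

(** Binary strings x^n are lists of booleans (false = 0, true = 1) of length n. *)

(** Gray code g(x^n) = x^n xor (0, x_1, ..., x_{n-1}). *)
Fixpoint gray_aux (prev : bool) (x : list bool) : list bool :=
  match x with
  | [] => []
  | b :: x' => xorb b prev :: gray_aux b x'
  end.
Definition gray (x : list bool) : list bool := gray_aux false x.

Fixpoint ginv_aux (c : bool) (x : list bool) : list bool :=
  match x with
  | [] => []
  | b :: x' => let c' := xorb c b in c' :: ginv_aux c' x'
  end.
Definition ginv (x : list bool) : list bool := ginv_aux false x.

Lemma gray_ginv_aux c x : gray_aux c (ginv_aux c x) = x.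
Proof.
  revert c; induction x as [|b x IH]; intro c; simpl; [reflexivity|].
  rewrite IH. f_equal. destruct c, b; reflexivity.
Qed.
Lemma gray_ginv x : gray (ginv x) = x.
Proof. apply gray_ginv_aux. Qed.
Lemma ginv_gray_aux c x : ginv_aux c (gray_aux c x) = x.
Proof.
  revert c; induction x as [|b x IH]; intro c; simpl; [reflexivity|].
  replace (xorb c (xorb b c)) with b by (destruct b, c; reflexivity).
  rewrite IH. reflexivity.
Qed.
Lemma ginv_gray x : ginv (gray x) = x.
Proof. apply ginv_gray_aux. Qed.

Fixpoint lexlt (u v : list bool) : bool :=
  match u, v with
  | bu :: u', bv :: v' => (negb bu && bv) || (Bool.eqb bu bv && lexlt u' v')
  | _, _ => false
  end.

Definition ltG (x y : list bool) : bool := lexlt (ginv x) (ginv y).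
Definition leG (x y : list bool) : bool :=
  ltG x y || (if list_eq_dec Bool.bool_dec x y then true else false).

Fixpoint allbits (n : nat) : list (list bool) :=
  match n with
  | O => [ [] ]
  | S m => map (cons false) (allbits m) ++ map (cons true) (allbits m)
  end.

(** y is the immediate successor of x in Gray order (y = x + 1, x = y - 1). *)
Definition is_succG (n : nat) (x y : list bool) : Prop :=
  length x = n /\ length y = n /\ ltG x y = true /\
  forall z, length z = n -> ~ (ltG x z = true /\ ltG z y = true).

Definition pbit (p0 p1 : R) (b : bool) : R := if b then p1 else p0.
Definition pw (p0 p1 : R) (x : list bool) : R := fold_right Rmult 1 (map (pbit p0 p1) x).

Definition sumR (l : list R) : R := fold_right Rplus 0 l.

Definition Fcdf (p0 p1 : R) (n : nat) (x : list bool) : R :=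
  sumR (map (pw p0 p1) (filter (fun a => leG a x) (allbits n))).

(** F(x^n - 1) = sum_{a^n <_G x^n} p(a^n), which is 0 when x^n is the smallest element. *)
Definition Fprev (p0 p1 : R) (n : nat) (x : list bool) : R :=
  sumR (map (pw p0 p1) (filter (fun a => ltG a x) (allbits n))).

Definition rho (p0 p1 : R) : R := Rmax (p0 / p1) (p1 / p0).

Definition Rfloor (r : R) : Z := (up r - 1)%Z.
Definition floorl (r : R) (l : Z) : R :=
  powerRZ 2 (- l) * IZR (Rfloor (powerRZ 2 l * r)).

Definition log2 (r : R) : R := ln r / ln 2.

Definition FI (p0 p1 a b : R) (n : nat) (x : list bool) : R :=
  a + (b - a) * Fcdf p0 p1 n x.
Definition FIprev (p0 p1 a b : R) (n : nat) (x : list bool) : R :=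
  a + (b - a) * Fprev p0 p1 n x.

(** lambda_h(x) = floor(- log2(alpha_h (b - a) p(x))), alpha_h = rho. *)
Definition lam (p0 p1 a b : R) (x : list bool) : Z :=
  Rfloor (- log2 (rho p0 p1 * (b - a) * pw p0 p1 x)).

Definition Fbar (p0 p1 a b : R) (n : nat) (x : list bool) : R :=
  floorl (FIprev p0 p1 a b n x + powerRZ 2 (- lam p0 p1 a b x)) (lam p0 p1 a b x).

(** The code point [Fbar x] is a dyadic number on the grid [2^-lam(x)]
    lying strictly above [F_I(x - 1)], hence within [2^-lam(x)] below
    [F_I(x) <= F_I(x - 1) + (b - a) p(x)].  Consecutive strings in Gray
    order differ in a single bit, so [p(x) <= rho p(x + 1)] and, by the
    choice of [lam], also [(b - a) p(x) <= 2^-lam(x + 1)].  Two dyadic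
    numbers on a common grid (the finer of the two) that are less than one
    grid step apart in the wrong order are equal, which gives (b); (a) and
    (c) follow directly. *)
From Stdlib Require Import Reals List Lra Lia ZArith Bool.
Import ListNotations.
Open Scope R_scope.

Lemma Rfloor_le r : IZR (Rfloor r) <= r.
Proof. unfold Rfloor. rewrite minus_IZR. destruct (archimed r). lra. Qed.

Lemma Rfloor_gt r : r < IZR (Rfloor r) + 1.
Proof. unfold Rfloor. rewrite minus_IZR. destruct (archimed r). lra. Qed.

Lemma powerRZ2_pos z : 0 < powerRZ 2 z.
Proof. apply powerRZ_lt; lra. Qed.

Lemma floorl_le r l : floorl r l <= r.
Proof.
  unfold floorl. rewrite powerRZ_neg'.
  pose proof (powerRZ2_pos l). pose proof (Rfloor_le (powerRZ 2 l * r)).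
  apply Rmult_le_reg_l with (powerRZ 2 l); auto.
  rewrite <- Rmult_assoc, Rinv_r; lra.
Qed.

Lemma floorl_gt r l : r - powerRZ 2 (- l) < floorl r l.
Proof.
  unfold floorl. rewrite powerRZ_neg'.
  pose proof (powerRZ2_pos l). pose proof (Rfloor_gt (powerRZ 2 l * r)).
  apply Rmult_lt_reg_l with (powerRZ 2 l); auto.
  rewrite <- Rmult_assoc, Rinv_r by lra.
  rewrite Rmult_minus_distr_l, Rinv_r by lra. lra.
Qed.

Lemma floorl_refine r l L : (l <= L)%Z ->
  exists k, floorl r l = powerRZ 2 (- L) * IZR k.
Proof.
  intro hlL. exists (Rfloor (powerRZ 2 l * r) * 2 ^ (L - l))%Z.
  unfold floorl. replace (- l)%Z with (- L + (L - l))%Z by lia.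
  rewrite powerRZ_add, mult_IZR by lra.
  replace (L - l)%Z with (Z.of_nat (Z.to_nat (L - l))) by lia.
  rewrite <- pow_powerRZ, <- pow_IZR. ring.
Qed.

Lemma grid_le d i j r : 0 < d ->
  d * IZR i <= r -> r - d < d * IZR j -> d * IZR i <= d * IZR j.
Proof.
  intros hd hi hj. apply Rmult_le_compat_l; [lra|]. apply IZR_le.
  assert (hij : IZR (i - j) < 1).
  { rewrite minus_IZR. apply Rmult_lt_reg_l with d; lra. }
  apply lt_IZR in hij. lia.
Qed.

Lemma floorl_le_floorl r s l L :
  r - powerRZ 2 (- l) < floorl s l -> r - powerRZ 2 (- L) < floorl s l ->
  floorl r L <= floorl s l.
Proof.
  intros hl hL. pose proof (floorl_le r L) as hr.
  destruct (Z.le_ge_cases l L) as [hlL | hLl].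
  - destruct (floorl_refine s l L hlL) as [k hk]. rewrite hk in hL |- *.
    unfold floorl in hr |- *. apply grid_le with r; auto. apply powerRZ2_pos.
  - destruct (floorl_refine r L l hLl) as [k hk]. rewrite hk in hr |- *.
    unfold floorl in hl |- *. apply grid_le with r; auto. apply powerRZ2_pos.
Qed.

Lemma le_powerRZ2_floor_log2 v : 0 < v -> v <= powerRZ 2 (- Rfloor (- log2 v)).
Proof.
  intro hv. set (l := Rfloor (- log2 v)).
  assert (hln2 : 0 < ln 2) by (rewrite <- ln_1; apply ln_increasing; lra).
  assert (hl : ln v <= IZR (- l) * ln 2).
  { pose proof (Rfloor_le (- log2 v)) as h. fold l in h. unfold log2 in h.
    rewrite opp_IZR.
    replace (ln v) with (ln v / ln 2 * ln 2) by (field; lra).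
    apply Rmult_le_compat_r; lra. }
  rewrite powerRZ_Rpower by lra. unfold Rpower.
  rewrite <- (exp_ln v) at 1 by auto.
  destruct hl as [hl | ->]; [left; apply exp_increasing; lra | lra].
Qed.

Definition eqbits (x a : list bool) : bool :=
  if list_eq_dec Bool.bool_dec a x then true else false.

Lemma lexlt_irrefl u : lexlt u u = false.
Proof. induction u as [|c u IH]; simpl; auto. rewrite IH. destruct c; reflexivity. Qed.

Lemma sumR_filter_leG p0 p1 x l :
  sumR (map (pw p0 p1) (filter (fun a => leG a x) l)) =
  sumR (map (pw p0 p1) (filter (fun a => ltG a x) l)) +
  sumR (map (pw p0 p1) (filter (eqbits x) l)).
Proof.
  induction l as [|a l IH]; [unfold sumR; simpl; lra|].
  assert (hcons : forall c r, sumR (c :: r) = c + sumR r) by reflexivity.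
  assert (hle : leG a x = ltG a x || eqbits x a) by reflexivity.
  assert (hexcl : eqbits x a = true -> ltG a x = false).
  { unfold eqbits. destruct (list_eq_dec Bool.bool_dec a x) as [->|]; [|discriminate].
    intros _. apply lexlt_irrefl. }
  cbn [filter].
  destruct (leG a x), (ltG a x), (eqbits x a); simpl in hle; try discriminate;
    try (specialize (hexcl eq_refl); discriminate);
    cbn [map]; rewrite ?hcons; lra.
Qed.

Lemma allbits_NoDup n : NoDup (allbits n).
Proof.
  induction n as [|n IH]; simpl.
  - constructor; [simpl; tauto | constructor].
  - apply NoDup_app; try (apply NoDup_map_NoDup_ForallPairs; auto; intros; congruence).
    intros a h1 h2. apply in_map_iff in h1 as [u [<- _]].
    apply in_map_iff in h2 as [v [h _]]. discriminate.
Qed.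

Lemma sumR_filter_eqbits_le p0 p1 x l : 0 <= pw p0 p1 x -> NoDup l ->
  sumR (map (pw p0 p1) (filter (eqbits x) l)) <= pw p0 p1 x.
Proof.
  intros hp hl. pose proof (NoDup_filter (eqbits x) hl) as hnd.
  assert (hall : forall a, In a (filter (eqbits x) l) -> a = x).
  { intros a ha. apply filter_In in ha as [_ ha]. unfold eqbits in ha.
    destruct (list_eq_dec Bool.bool_dec a x); auto; discriminate. }
  destruct (filter (eqbits x) l) as [|a [|a' r]]; simpl.
  - lra.
  - rewrite (hall a) by (simpl; auto). lra.
  - exfalso. inversion hnd as [|? ? hnotin]; subst. apply hnotin.
    rewrite (hall a), (hall a') by (simpl; auto). simpl; auto.
Qed.

Lemma Fcdf_le_Fprev_add p0 p1 n x : 0 <= pw p0 p1 x ->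
  Fcdf p0 p1 n x <= Fprev p0 p1 n x + pw p0 p1 x.
Proof.
  intro hp. unfold Fcdf, Fprev. rewrite sumR_filter_leG.
  pose proof (sumR_filter_eqbits_le p0 p1 x (allbits n) hp (allbits_NoDup n)). lra.
Qed.

(** * Successors in Gray order differ in one bit *)

(** Lexicographic successor (first symbol most significant), with the
    carry out; on [1^k] it wraps around to [0^k] with carry [true]. *)
Fixpoint lexsucc (u : list bool) : list bool * bool :=
  match u with
  | [] => ([], true)
  | c :: u' =>
      let '(v, carry) := lexsucc u' in
      if carry then (if c then (false :: v, true) else (true :: v, false))
      else (c :: v, false)
  end.

Definition lexle (u v : list bool) : Prop := u = v \/ lexlt u v = true.

Lemma lexle_cons c u v : lexle u v -> lexle (c :: u) (c :: v).
Proof.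
  intros [-> | h]; [left; reflexivity | right; simpl; rewrite h, eqb_reflx, orb_true_r; auto].
Qed.

Lemma lexsucc_length u : length (fst (lexsucc u)) = length u.
Proof.
  induction u as [|c u IH]; simpl; auto.
  destruct (lexsucc u) as [v []]; simpl in *; destruct c; simpl; auto.
Qed.

Lemma lexsucc_carry_min u : snd (lexsucc u) = true ->
  forall v, length v = length u -> lexle (fst (lexsucc u)) v.
Proof.
  induction u as [|c u IH]; intros hc v hv.
  - destruct v; simpl in *; [left; auto | discriminate].
  - destruct v as [|c' v]; simpl in hv; [discriminate|]. injection hv as hv.
    simpl in *. destruct (lexsucc u) as [w carry] eqn:e; simpl in *.
    destruct carry, c; simpl in hc; try discriminate.
    destruct c'; [right; reflexivity|].
    apply lexle_cons. exact (IH eq_refl v hv).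
Qed.

Lemma lexsucc_le u v : length v = length u -> lexlt u v = true ->
  snd (lexsucc u) = false /\ lexle (fst (lexsucc u)) v.
Proof.
  revert v; induction u as [|c u IH]; intros v hv hlt.
  - destruct v; simpl in *; discriminate.
  - destruct v as [|c' v]; simpl in hv; [discriminate|]. injection hv as hv.
    simpl in hlt |- *.
    destruct (negb c && c') eqn:hcc.
    + destruct c, c'; simpl in hcc; try discriminate.
      destruct (lexsucc u) as [w []] eqn:e; simpl; split; auto; [|right; reflexivity].
      pose proof (lexsucc_carry_min u) as hmin. rewrite e in hmin.
      apply lexle_cons. exact (hmin eq_refl v hv).
    + simpl in hlt. apply andb_prop in hlt as [hceq hlt].
      apply eqb_prop in hceq; subst c'.
      destruct (IH v hv hlt) as [hc hle].
      destruct (lexsucc u) as [w carry]; simpl in *; subst carry; simpl.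
      split; auto. apply lexle_cons; auto.
Qed.

Lemma lexsucc_gt u : snd (lexsucc u) = false -> lexlt u (fst (lexsucc u)) = true.
Proof.
  induction u as [|c u IH]; simpl; intro hc; [discriminate|].
  destruct (lexsucc u) as [w []]; simpl in *; destruct c; simpl in *;
    try discriminate; auto; rewrite IH; auto.
Qed.

(** A carry flips every bit below it, which on Gray codes only swaps the
    parity fed into the next position. *)
Lemma gray_lexsucc_carry u : snd (lexsucc u) = true ->
  gray_aux false u = gray_aux true (fst (lexsucc u)) /\
  gray_aux true u = gray_aux false (fst (lexsucc u)).
Proof.
  induction u as [|c u IH]; simpl; intro hc; [auto|].
  destruct (lexsucc u) as [w []]; destruct c; simpl in *; try discriminate.
  destruct (IH eq_refl) as [_ h2]. rewrite h2. split; reflexivity.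
Qed.

Lemma length_ginv_aux c x : length (ginv_aux c x) = length x.
Proof. revert c; induction x; simpl; auto. Qed.

Lemma length_gray_aux c x : length (gray_aux c x) = length x.
Proof. revert c; induction x; simpl; auto. Qed.

Lemma pw_cons p0 p1 c x : pw p0 p1 (c :: x) = pbit p0 p1 c * pw p0 p1 x.
Proof. reflexivity. Qed.

Lemma pw_pos p0 p1 x : 0 < p0 -> 0 < p1 -> 0 < pw p0 p1 x.
Proof.
  intros h0 h1. induction x as [|c x IH]; [unfold pw; simpl; lra|].
  rewrite pw_cons. apply Rmult_lt_0_compat; auto. destruct c; simpl; auto.
Qed.

Lemma pw_gray_lexsucc p0 p1 r u : 0 < p0 -> 0 < p1 ->
  (forall c c', pbit p0 p1 c <= r * pbit p0 p1 c') ->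
  snd (lexsucc u) = false -> forall q,
  pw p0 p1 (gray_aux q u) <= r * pw p0 p1 (gray_aux q (fst (lexsucc u))).
Proof.
  intros h0 h1 hr.
  assert (hr0 : 0 <= r).
  { specialize (hr false false). simpl in hr. nra. }
  induction u as [|c u IH]; simpl; intros hc q; [discriminate|].
  destruct (lexsucc u) as [w carry] eqn:e; simpl in *.
  destruct carry.
  - destruct c; simpl in *; try discriminate.
    pose proof (gray_lexsucc_carry u) as hg. rewrite e in hg.
    destruct (hg eq_refl) as [hgf _].
    rewrite !pw_cons, hgf.
    pose proof (pw_pos p0 p1 (gray_aux true w) h0 h1).
    simpl in hgf |- *. specialize (hr q (negb q)). destruct q; simpl in *; nra.
  - rewrite !pw_cons. specialize (IH eq_refl c).
    assert (0 <= pbit p0 p1 (xorb c q)) by (destruct (xorb c q); simpl; lra).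
    simpl. rewrite pw_cons. nra.
Qed.

Lemma pbit_le_rho p0 p1 c c' : 0 < p0 -> 0 < p1 ->
  pbit p0 p1 c <= rho p0 p1 * pbit p0 p1 c'.
Proof.
  intros h0 h1. unfold rho.
  set (q01 := p0 / p1). set (q10 := p1 / p0).
  pose proof (Rmax_l q01 q10). pose proof (Rmax_r q01 q10).
  assert (e01 : p0 = q01 * p1) by (unfold q01; field; lra).
  assert (e10 : p1 = q10 * p0) by (unfold q10; field; lra).
  assert (hq : q01 * q10 = 1) by (unfold q01, q10; field; lra).
  assert (0 < q01) by (unfold q01; apply Rdiv_lt_0_compat; auto).
  assert (0 < q10) by (unfold q10; apply Rdiv_lt_0_compat; auto).
  assert (1 <= Rmax q01 q10) by nra.
  destruct c, c'; simpl; nra.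
Qed.

Lemma pw_le_rho_pw_succG p0 p1 n x y : 0 < p0 -> 0 < p1 -> is_succG n x y ->
  pw p0 p1 x <= rho p0 p1 * pw p0 p1 y.
Proof.
  intros h0 h1 [hx [hy [hlt hmin]]]. unfold ltG in hlt.
  assert (hlen : length (ginv y) = length (ginv x)).
  { unfold ginv. rewrite !length_ginv_aux; congruence. }
  destruct (lexsucc_le _ _ hlen hlt) as [hc [he | hlt']].
  2:{ exfalso. apply (hmin (gray (fst (lexsucc (ginv x))))).
      - unfold gray, ginv. rewrite length_gray_aux, lexsucc_length, length_ginv_aux; auto.
      - unfold ltG. rewrite ginv_gray. split; auto. apply lexsucc_gt; auto. }
  rewrite <- (gray_ginv x), <- (gray_ginv y), <- he.
  apply pw_gray_lexsucc; auto. intros; apply pbit_le_rho; auto.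
Qed.

Lemma rho_ge_1 p0 p1 : 0 < p0 -> 0 < p1 -> 1 <= rho p0 p1.
Proof. intros h0 h1. pose proof (pbit_le_rho p0 p1 false false h0 h1). simpl in *. nra. Qed.

Section CodePoints.

Variables (p0 p1 a b : R) (n : nat).
Hypotheses (h0 : 0 < p0) (h1 : 0 < p1) (hab : a < b).

Lemma interval_pw_le_lam x :
  rho p0 p1 * (b - a) * pw p0 p1 x <= powerRZ 2 (- lam p0 p1 a b x).
Proof.
  apply le_powerRZ2_floor_log2.
  pose proof (rho_ge_1 p0 p1 h0 h1). pose proof (pw_pos p0 p1 x h0 h1).
  apply Rmult_lt_0_compat; [apply Rmult_lt_0_compat|]; lra.
Qed.

Lemma FIprev_lt_Fbar x : FIprev p0 p1 a b n x < Fbar p0 p1 a b n x.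
Proof.
  unfold Fbar.
  pose proof (floorl_gt (FIprev p0 p1 a b n x + powerRZ 2 (- lam p0 p1 a b x))
                        (lam p0 p1 a b x)).
  lra.
Qed.

Lemma FI_le_FIprev_add x :
  FI p0 p1 a b n x <= FIprev p0 p1 a b n x + (b - a) * pw p0 p1 x.
Proof.
  unfold FI, FIprev.
  pose proof (Fcdf_le_Fprev_add p0 p1 n x (Rlt_le _ _ (pw_pos p0 p1 x h0 h1))).
  nra.
Qed.

Lemma floorl_FI_le_Fbar_succG x y : is_succG n x y ->
  floorl (FI p0 p1 a b n x) (lam p0 p1 a b y) <= Fbar p0 p1 a b n x.
Proof.
  intro hxy.
  pose proof (rho_ge_1 p0 p1 h0 h1). pose proof (pw_pos p0 p1 x h0 h1).
  pose proof (FI_le_FIprev_add x). pose proof (FIprev_lt_Fbar x) as hbar.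
  assert (hx : (b - a) * pw p0 p1 x <= powerRZ 2 (- lam p0 p1 a b x)).
  { pose proof (interval_pw_le_lam x).
    assert (0 < (b - a) * pw p0 p1 x) by (apply Rmult_lt_0_compat; lra). nra. }
  assert (hy : (b - a) * pw p0 p1 x <= powerRZ 2 (- lam p0 p1 a b y)).
  { pose proof (interval_pw_le_lam y).
    pose proof (pw_le_rho_pw_succG p0 p1 n x y h0 h1 hxy). nra. }
  unfold Fbar in *. apply floorl_le_floorl; lra.
Qed.

End CodePoints.

Theorem lemma2 (p0 p1 a b : R) (n : nat)
  (Hp0 : 0 < p0 < 1) (Hp1 : 0 < p1 < 1) (Hsum : p0 + p1 = 1) (Hneq : p0 <> p1)
  (Ha : 0 <= a) (Hab : a < b) (Hb : b <= 1) :
  (* (a) *)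
  (forall x : list bool, length x = n ->
     Fbar p0 p1 a b n x >= FIprev p0 p1 a b n x) /\
  (* (b): x not largest, y = x + 1 *)
  (forall x y : list bool, is_succG n x y ->
     Fbar p0 p1 a b n x >= floorl (FI p0 p1 a b n x) (lam p0 p1 a b y)) /\
  (* (c): w = x - 1, y = x + 1 *)
  (forall w x y : list bool, is_succG n w x -> is_succG n x y ->
     forall t : R,
       Rmin (Fbar p0 p1 a b n w) (FI p0 p1 a b n w) <= t <
       Rmin (Fbar p0 p1 a b n x) (FI p0 p1 a b n x) ->
       floorl (FI p0 p1 a b n w) (lam p0 p1 a b x) <= t < Fbar p0 p1 a b n x).
Proof.
  destruct Hp0 as [h0 _], Hp1 as [h1 _].
  split; [|split].
  - intros x _. apply Rle_ge, Rlt_le, FIprev_lt_Fbar; auto.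
  - intros x y hxy. apply Rle_ge, floorl_FI_le_Fbar_succG; auto.
  - intros w x y hwx _ t [hlo hhi]. split.
    + apply Rle_trans with (2 := hlo), Rmin_glb.
      * apply floorl_FI_le_Fbar_succG; auto.
      * apply floorl_le.
    + pose proof (Rmin_l (Fbar p0 p1 a b n x) (FI p0 p1 a b n x)). lra.
Qed.
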